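(* Let $a>0$, $h>0$, and let $\alpha_1$ be the smallest positive solution $q$ of $\tan(hq)=\frac{2aq}{q^2-a^2}$. If $ha\le1$, then $$\alpha_1\le\sqrt{a^2+\frac{2a}{h}}\le\frac{\sqrt{3a}}{\sqrt h}.$$ If moreover $ha\le 1/3$, then $$\sqrt{a^2+\frac{2a}{h+2ah^2}}\le\alpha_1.$$ Consequently, $\lim_{h\to0}\frac{\alpha_1(h)}{\sqrt{2a/h}}=1$. *)

From Stdlib Require Import Reals.
From Coquelicot Require Import Coquelicot.
Open Scope R_scope.

(* q is a (genuine) solution of tan(h q) = 2 a q / (q^2 - a^2):
   both sides are defined (cos (h q) <> 0 and q <> a, q > 0 so q^2 - a^2 <> 0)
   and the equality holds. *)
Definition is_pos_solution (a h q : R) : Prop :=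
  0 < q /\ cos (h * q) <> 0 /\ q ^ 2 - a ^ 2 <> 0 /\
  tan (h * q) = 2 * a * q / (q ^ 2 - a ^ 2).

Definition is_smallest_pos_solution (a h alpha1 : R) : Prop :=
  is_pos_solution a h alpha1 /\
  (forall q, is_pos_solution a h q -> alpha1 <= q).

From Stdlib Require Import Reals Lra.
From Coquelicot Require Import Coquelicot.
Open Scope R_scope.

(* Clearing denominators, the solutions q > a are the zeros of
   g(q) = sin(hq)(q^2 - a^2) - 2aq cos(hq), and there are no solutions below a.
   For ha <= 1 we have g(a) < 0, while at Q = sqrt(a^2 + 2a/h), where
   Q^2 - a^2 = 2a/h, the inequality y cos y <= sin y at y = hQ <= sqrt 3 gives
   g(Q) >= 0; the intermediate value theorem puts a solution below Q.
   For ha <= 1/3 and a < q with q^2 - a^2 < 2a/D, D = h + 2ah^2, the bound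
   tan x <= x + x^3 gives tan(hq) < qD < 2aq/(q^2 - a^2), so no such q solves
   the equation.  Squaring both bounds pins alpha_1 / sqrt(2a/h) within 2ah of 1. *)

Lemma mul_cos_le_sin y : 0 <= y <= PI -> y * cos y <= sin y.
Proof.
  intros Hy.
  destruct (MVT_gen (fun x => sin x - x * cos x) 0 y (fun x => x * sin x))
    as [c [Hc Hmvt]].
  - intros x _. auto_derive; [exact I | ring].
  - intros x _. reg.
  - rewrite Rmin_left, Rmax_right in Hc by lra.
    rewrite sin_0, cos_0 in Hmvt.
    assert (0 <= c * sin c * (y - 0))
      by (apply Rmult_le_pos; [apply Rmult_le_pos, sin_ge_0|]; lra).
    lra.
Qed.

Lemma cos_ge_1_sub_sqr_half x : 0 < x <= PI -> 1 - x ^ 2 / 2 <= cos x.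
Proof.
  intros Hx.
  replace (cos x) with (1 - 2 * sin (x / 2) * sin (x / 2))
    by (rewrite <- cos_2a_sin; f_equal; field).
  assert (0 <= sin (x / 2)) by (apply sin_ge_0; lra).
  assert (sin (x / 2) < x / 2) by (apply sin_lt_x; lra).
  nra.
Qed.

Lemma tan_le_add_cube x : 0 < x <= 1 -> tan x <= x + x ^ 3.
Proof.
  intros Hx.
  pose proof PI2_3_2.
  assert (Hcos := cos_ge_1_sub_sqr_half x ltac:(lra)).
  assert (sin x < x) by (apply sin_lt_x; lra).
  assert (Hx2 : x ^ 2 <= 1) by nra.
  assert (Hx3 : 0 <= x ^ 3 * (1 - x ^ 2)) by (apply Rmult_le_pos; nra).
  assert (x <= (x + x ^ 3) * (1 - x ^ 2 / 2)) by nra.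
  assert ((x + x ^ 3) * (1 - x ^ 2 / 2) <= (x + x ^ 3) * cos x)
    by (apply Rmult_le_compat_l; nra).
  unfold tan. apply Rle_div_l; lra.
Qed.

Lemma Rabs_sub1_le_of_sqr_bounds r t :
  0 < r -> 0 <= t -> 1 <= r ^ 2 * (1 + 2 * t) -> r ^ 2 <= 1 + t / 2 ->
  Rabs (r - 1) <= 2 * t.
Proof.
  intros Hr Ht Hlo Hup.
  apply Rabs_le. split; nra.
Qed.

Lemma filterlim_at_right0_of_linear_bound (f : R -> R) (l C d : R) :
  0 < d -> (forall h, 0 < h < d -> Rabs (f h - l) <= C * h) ->
  filterlim f (at_right 0) (locally l).
Proof.
  intros Hd Hf.
  apply filterlim_locally. intros eps.
  pose proof (cond_pos eps) as Heps.
  pose proof (Rabs_pos C) as HC.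
  assert (Hdelta : 0 < Rmin d (eps / (Rabs C + 1))).
  { apply Rmin_glb_lt; [lra | apply Rdiv_lt_0_compat; lra]. }
  exists (mkposreal _ Hdelta). intros h Hball Hh.
  change (Rabs (h - 0) < Rmin d (eps / (Rabs C + 1))) in Hball.
  rewrite Rminus_0_r, Rabs_pos_eq in Hball by lra.
  apply Rmin_Rgt in Hball as [Hhd Hheps].
  apply Rlt_div_r in Hheps; [|lra].
  change (Rabs (f h - l) < eps).
  specialize (Hf h (conj Hh Hhd)).
  pose proof (Rle_abs C).
  nra.
Qed.

Section TanEquation.

Variables a h : R.
Hypotheses (Ha : 0 < a) (Hh : 0 < h).

Definition cleared_tan_eq (q : R) : R :=
  sin (h * q) * (q ^ 2 - a ^ 2) - 2 * a * q * cos (h * q).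

Lemma continuous_cleared_tan_eq : continuity cleared_tan_eq.
Proof. unfold cleared_tan_eq. reg. Qed.

Lemma is_pos_solution_of_cleared_root q :
  a < q -> cleared_tan_eq q = 0 -> is_pos_solution a h q.
Proof.
  unfold cleared_tan_eq. intros Haq Hroot.
  assert (Hsq : 0 < q ^ 2 - a ^ 2) by nra.
  assert (Hcos : cos (h * q) <> 0).
  { intros Hc. rewrite Hc in Hroot.
    pose proof (sin2_cos2 (h * q)) as Hpyth.
    rewrite Hc in Hpyth. unfold Rsqr in Hpyth.
    assert (sin (h * q) = 0)
      by (apply (Rmult_eq_reg_r (q ^ 2 - a ^ 2)); lra).
    nra. }
  repeat split; [lra | exact Hcos | lra |].
  unfold tan. field_simplify_eq; [lra | split; [lra | exact Hcos]].
Qed.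

Lemma cleared_tan_eq_lt0_at_a : h * a < PI / 2 -> cleared_tan_eq a < 0.
Proof.
  intros Hha. unfold cleared_tan_eq.
  assert (0 < cos (h * a)) by (apply cos_gt_0; nra).
  assert (0 < a * a * cos (h * a)) by (apply Rmult_lt_0_compat; nra).
  nra.
Qed.

Lemma cleared_tan_eq_ge0_at_bound :
  h * a <= 1 -> 0 <= cleared_tan_eq (sqrt (a ^ 2 + 2 * a / h)).
Proof.
  intros Hha. unfold cleared_tan_eq.
  assert (Hk : 0 < 2 * a / h) by (apply Rdiv_lt_0_compat; lra).
  set (q := sqrt (a ^ 2 + 2 * a / h)).
  assert (Hq2 : q ^ 2 = a ^ 2 + 2 * a / h) by (apply pow2_sqrt; nra).
  assert (Hq : 0 < q) by (apply sqrt_lt_R0; nra).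
  assert (Hy2 : (h * q) ^ 2 <= 3).
  { replace ((h * q) ^ 2) with (h ^ 2 * q ^ 2) by ring.
    rewrite Hq2.
    replace (h ^ 2 * (a ^ 2 + 2 * a / h)) with ((h * a) ^ 2 + h * (2 * a))
      by (field; lra).
    assert (0 < h * a) by nra.
    nra. }
  pose proof PI2_3_2.
  assert (Hy := mul_cos_le_sin (h * q) ltac:(split; nra)).
  replace (q ^ 2 - a ^ 2) with (2 * a / h) by lra.
  replace (2 * a * q * cos (h * q)) with (2 * a / h * (h * q * cos (h * q)))
    by (field; lra).
  nra.
Qed.

Lemma smallest_pos_solution_le al :
  h * a <= 1 -> is_smallest_pos_solution a h al ->
  al <= sqrt (a ^ 2 + 2 * a / h).
Proof.
  intros Hha [_ Hmin].
  pose proof PI2_1.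
  assert (Hlt := cleared_tan_eq_lt0_at_a ltac:(lra)).
  assert (Hge := cleared_tan_eq_ge0_at_bound Hha).
  assert (Hab : a < sqrt (a ^ 2 + 2 * a / h)).
  { rewrite <- (sqrt_pow2 a) at 1 by lra.
    apply sqrt_lt_1_alt; split; [nra|].
    assert (0 < 2 * a / h) by (apply Rdiv_lt_0_compat; lra). lra. }
  assert (Hsign : cleared_tan_eq a * cleared_tan_eq (sqrt (a ^ 2 + 2 * a / h)) <= 0)
    by nra.
  destruct (IVT_cor _ _ _ continuous_cleared_tan_eq (Rlt_le _ _ Hab) Hsign)
    as [z [[Hz1 Hz2] Hroot]].
  assert (Haz : a < z).
  { destruct Hz1 as [| <-]; [assumption | lra]. }
  apply Rle_trans with z; [|exact Hz2].
  apply Hmin, is_pos_solution_of_cleared_root; assumption.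
Qed.

Lemma pos_solution_gt q : h * a <= PI / 2 -> is_pos_solution a h q -> a < q.
Proof.
  intros Hha (Hq & _ & Hsq & Htan).
  destruct (Rtotal_order q a) as [Hqa | [-> | Hqa]]; [| lra | lra].
  assert (0 < tan (h * q)) by (apply tan_gt_0; nra).
  assert (/ (q ^ 2 - a ^ 2) < 0) by (apply Rinv_lt_0_compat; nra).
  assert (0 < 2 * a * q) by nra.
  unfold Rdiv in Htan. nra.
Qed.

Lemma tan_lt_of_sqr_sub_lt q :
  h * a <= 1 / 3 -> a < q -> q ^ 2 - a ^ 2 < 2 * a / (h + 2 * a * h ^ 2) ->
  tan (h * q) < 2 * a * q / (q ^ 2 - a ^ 2).
Proof.
  intros Hha Haq Hsq.
  set (t := h * a) in *. set (x := h * q).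
  assert (Ht : 0 < t) by (unfold t; nra).
  assert (HD : h + 2 * a * h ^ 2 = h * (1 + 2 * t)) by (unfold t; ring).
  rewrite HD in Hsq.
  assert (Hx2 : x ^ 2 < 2 * t).
  { assert (Hh2 : 0 < h ^ 2) by nra.
    assert (h ^ 2 * q ^ 2 < h ^ 2 * (a ^ 2 + 2 * a / (h * (1 + 2 * t))))
      by (apply Rmult_lt_compat_l; lra).
    replace (h ^ 2 * (a ^ 2 + 2 * a / (h * (1 + 2 * t))))
      with (t ^ 2 + 2 * t / (1 + 2 * t)) in * by (unfold t; field; nra).
    assert (0 <= t ^ 2 * (3 - 2 * t)) by (apply Rmult_le_pos; nra).
    assert (2 * t / (1 + 2 * t) <= 2 * t - t ^ 2) by (apply Rle_div_l; nra).
    unfold x. nra. }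
  assert (Hx : 0 < x) by (unfold x; nra).
  assert (Htan := tan_le_add_cube x ltac:(split; nra)).
  assert (Hcube : x + x ^ 3 < q * (h * (1 + 2 * t))).
  { replace (q * (h * (1 + 2 * t))) with (x * (1 + 2 * t)) by (unfold x; ring).
    nra. }
  assert (Hrhs : q * (h * (1 + 2 * t)) < 2 * a * q / (q ^ 2 - a ^ 2)).
  { apply (Rlt_div_r (q * (h * (1 + 2 * t)))); [nra|].
    apply Rlt_div_r in Hsq; [|nra].
    assert (q * ((q ^ 2 - a ^ 2) * (h * (1 + 2 * t))) < q * (2 * a))
      by (apply Rmult_lt_compat_l; lra).
    lra. }
  lra.
Qed.

Lemma pos_solution_ge q :
  h * a <= 1 / 3 -> is_pos_solution a h q ->
  sqrt (a ^ 2 + 2 * a / (h + 2 * a * h ^ 2)) <= q.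
Proof.
  intros Hha Hsol.
  pose proof PI2_1.
  assert (Haq := pos_solution_gt q ltac:(lra) Hsol).
  destruct Hsol as (Hq & _ & _ & Htan).
  apply Rnot_lt_le. intros Hlt.
  assert (Hk : 0 < 2 * a / (h + 2 * a * h ^ 2))
    by (apply Rdiv_lt_0_compat; nra).
  assert (Hq2 : q ^ 2 < a ^ 2 + 2 * a / (h + 2 * a * h ^ 2)).
  { rewrite <- (pow2_sqrt (a ^ 2 + _)) by nra. nra. }
  assert (Hlt' := tan_lt_of_sqr_sub_lt q Hha Haq ltac:(lra)).
  lra.
Qed.

Lemma smallest_pos_solution_sqr_bounds al :
  h * a <= 1 / 3 -> is_smallest_pos_solution a h al ->
  a ^ 2 + 2 * a / (h + 2 * a * h ^ 2) <= al ^ 2 <= a ^ 2 + 2 * a / h.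
Proof.
  intros Hha Hsol.
  assert (Hup := smallest_pos_solution_le al ltac:(lra) Hsol).
  assert (Hlo := pos_solution_ge al Hha (proj1 Hsol)).
  assert (0 < al) by apply Hsol.
  assert (0 < 2 * a / h) by (apply Rdiv_lt_0_compat; lra).
  assert (0 < 2 * a / (h + 2 * a * h ^ 2)) by (apply Rdiv_lt_0_compat; nra).
  split.
  - rewrite <- (pow2_sqrt (a ^ 2 + _)) at 1 by nra.
    apply pow_incr; split; [apply sqrt_pos | lra].
  - rewrite <- (pow2_sqrt (a ^ 2 + 2 * a / h)) by nra.
    apply pow_incr; lra.
Qed.

Lemma smallest_pos_solution_ratio_near1 al :
  h * a <= 1 / 3 -> is_smallest_pos_solution a h al ->
  Rabs (al / sqrt (2 * a / h) - 1) <= 2 * a * h.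
Proof.
  intros Hha Hsol.
  destruct (smallest_pos_solution_sqr_bounds al Hha Hsol) as [Hlo Hup].
  assert (Hal : 0 < al) by apply Hsol.
  set (t := a * h).
  set (k := 2 * a / h) in *.
  assert (Hk : 0 < k) by (apply Rdiv_lt_0_compat; lra).
  assert (Ha2 : a ^ 2 = k * (t / 2)) by (unfold k, t; field; lra).
  assert (HkD : 2 * a / (h + 2 * a * h ^ 2) * (1 + 2 * t) = k)
    by (unfold k, t; field; nra).
  set (s := sqrt k).
  assert (Hs2 : s ^ 2 = k) by (apply pow2_sqrt; lra).
  assert (Hs : 0 < s) by (apply sqrt_lt_R0; lra).
  set (r := al / s).
  assert (Hrk : r ^ 2 * k = al ^ 2) by (unfold r; rewrite <- Hs2; field; lra).
  assert (Ht : 0 < t) by (unfold t; nra).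
  replace (2 * a * h) with (2 * t) by (unfold t; ring).
  apply Rabs_sub1_le_of_sqr_bounds; [apply Rdiv_lt_0_compat; lra | lra | |].
  - apply (Rmult_le_reg_r k); [lra|].
    replace (r ^ 2 * (1 + 2 * t) * k) with (al ^ 2 * (1 + 2 * t))
      by (rewrite <- Hrk; ring).
    assert (0 <= (al ^ 2 - a ^ 2 - 2 * a / (h + 2 * a * h ^ 2)) * (1 + 2 * t))
      by (apply Rmult_le_pos; lra).
    assert (0 <= a ^ 2 * (1 + 2 * t)) by (apply Rmult_le_pos; nra).
    lra.
  - apply (Rmult_le_reg_r k); lra.
Qed.

End TanEquation.

Theorem lemma3p3 (a : R) (Ha : 0 < a) :
  (forall (h alpha1 : R), 0 < h -> is_smallest_pos_solution a h alpha1 ->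
     (h * a <= 1 ->
        alpha1 <= sqrt (a ^ 2 + 2 * a / h) /\
        sqrt (a ^ 2 + 2 * a / h) <= sqrt (3 * a) / sqrt h) /\
     (h * a <= 1 / 3 ->
        sqrt (a ^ 2 + 2 * a / (h + 2 * a * h ^ 2)) <= alpha1)) /\
  (forall (h0 : R) (alpha : R -> R), 0 < h0 ->
     (forall h, 0 < h < h0 -> is_smallest_pos_solution a h (alpha h)) ->
     filterlim (fun h => alpha h / sqrt (2 * a / h)) (at_right 0) (locally 1)).
Proof.
  split.
  - intros h al Hh Hsol. split.
    + intros Hha. split.
      * now apply smallest_pos_solution_le.
      * rewrite <- sqrt_div by lra. apply sqrt_le_1_alt.
        replace (3 * a / h) with (a ^ 2 + 2 * a / h + a / h * (1 - h * a))
          by (field; lra).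
        assert (0 <= a / h * (1 - h * a))
          by (apply Rmult_le_pos; [apply Rlt_le, Rdiv_lt_0_compat |]; lra).
        lra.
    + intros Hha. apply pos_solution_ge; [assumption.. | apply Hsol].
  - intros h0 alpha Hh0 Hsol.
    apply (filterlim_at_right0_of_linear_bound _ 1 (2 * a) (Rmin h0 (1 / (3 * a)))).
    + apply Rmin_glb_lt; [lra | apply Rdiv_lt_0_compat; lra].
    + intros h [Hh Hhd]. apply Rmin_Rgt in Hhd as [Hhh0 Hha].
      apply smallest_pos_solution_ratio_near1; [lra | lra | | apply Hsol; lra].
      apply Rlt_div_r in Hha; [lra | lra].
Qed.
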